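(* Let $(X,Y)$ be a random pair with $X\in\mathbb{R}^d$ and $Y\in\{+1,-1\}$ with arbitrary joint distribution. Let $\alpha\in[0,1)$ and let $\varphi$ be one of the losses $\varphi_{\mathrm{LR}},\varphi_{\mathrm{LS},\alpha},\varphi_{\mathrm{MLS},\alpha},\varphi_{\mathrm{LSQ}}$, with $\phi(v,y)=\varphi(yv)$. Let $\bar g\in\operatorname{argmin}_{g:\mathbb{R}^d\to\mathbb{R}}\mathbb{E}[\phi(g(X),Y)]$, and let $h(v)=-1$ if $v\le0$ and $h(v)=+1$ if $v>0$. Then $\Pr(h(\bar g(X))\neq Y)=\inf_{f:\mathbb{R}^d\to\{+1,-1\}}\Pr(f(X)\neq Y)$.
   Context: The losses are: $\varphi_{\mathrm{LR}}(v)=-\ln\frac{1}{1+e^{-v}}$; $\varphi_{\mathrm{LS},\alpha}(v)=-(1-\frac{\alpha}{2})\ln\frac{1}{1+e^{-v}}-\frac{\alpha}{2}\ln\frac{1}{1+e^{v}}$; $\varphi_{\mathrm{MLS},\alpha}(v)=-(1-\frac{\alpha}{2})\ln\big(\frac{1-\alpha}{1+e^{-v}}+\frac{\alpha}{2}\big)-\frac{\alpha}{2}\ln\big(\frac{1-\alpha}{1+e^{v}}+\frac{\alpha}{2}\big)$; $\varphi_{\mathrm{LSQ}}(v)=\frac{1}{2(1+e^{v})^2}$. Minimizations/infima are over measurable functions. The left-hand side is the expected zero-one loss (misclassification rate) of the classifier $h\circ\bar g$. *)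

From HB Require Import structures.
From mathcomp Require Import all_boot all_order all_algebra.
From mathcomp Require Import all_classical all_reals all_analysis.
Set Implicit Arguments. Unset Strict Implicit. Unset Printing Implicit Defensive.
Import Order.TTheory GRing.Theory Num.Theory.
Local Open Scope ring_scope.

Inductive loss_kind := LR | LS | MLS | LSQ.

Section Losses.
Variable R : realType.

Definition phi_LR (v : R) : R := - ln (1 / (1 + expR (- v))).

Definition phi_LS (alpha v : R) : R :=
  - (1 - alpha / 2) * ln (1 / (1 + expR (- v)))
  - (alpha / 2) * ln (1 / (1 + expR v)).

Definition phi_MLS (alpha v : R) : R :=
  - (1 - alpha / 2) * ln ((1 - alpha) / (1 + expR (- v)) + alpha / 2)
  - (alpha / 2) * ln ((1 - alpha) / (1 + expR v) + alpha / 2).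

Definition phi_LSQ (v : R) : R := 1 / (2 * (1 + expR v) ^+ 2).

Definition loss (k : loss_kind) (alpha : R) : R -> R :=
  match k with
  | LR => phi_LR
  | LS => phi_LS alpha
  | MLS => phi_MLS alpha
  | LSQ => phi_LSQ
  end.

Definition hsign (v : R) : R := if v <= 0 then -1 else 1.
End Losses.

From HB Require Import structures.
From mathcomp Require Import all_boot all_order all_algebra.
From mathcomp Require Import all_classical all_reals all_analysis.
From mathcomp Require Import measurable_realfun ring lra.
Import Order.TTheory GRing.Theory Num.Theory.
Set Implicit Arguments. Unset Strict Implicit. Unset Printing Implicit Defensive.
Local Open Scope classical_set_scope.
Local Open Scope ring_scope.

(* Let g minimise the surrogate risk.  Replacing g by -g on a set C of inputs cannot
   lower the risk; where g > 0 this raises the loss of the examples labelled +1 and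
   lowers that of the examples labelled -1 by the same flip cost phi(-g) - phi(g) > 0.
   Cutting C into slices on which this cost varies by a factor at most 1/q, and
   letting q -> 1, gives P(X in C, Y = -1) <= P(X in C, Y = +1).  The case g < 0 is
   symmetric, and on {g = 0} one replaces g by a small constant t instead, which the
   slope condition of the loss at 0 makes profitable unless
   P(X in C, Y = +1) <= P(X in C, Y = -1).  So the plug-in classifier h o g beats
   every classifier on each set where the two disagree.  The four losses satisfy
   these conditions: LR, LS and MLS are cross-entropies between a smoothed target
   and a shrunk sigmoid, and LSQ is half a squared sigmoid. *)

Lemma measurable_preimageT (d d' : measure_display) (A : measurableType d)
    (B : measurableType d') (f : A -> B) (S : set B) :
  measurable_fun setT f -> measurable S -> measurable (f @^-1` S).
Proof. by move=> mf mS; rewrite -[_ @^-1` _]setTI; apply: mf. Qed.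

Lemma exists_expr_lt (R : realType) (q e : R) : 0 <= q < 1 -> 0 < e ->
  exists N : nat, q ^+ N < e.
Proof.
move=> /andP[q0 q1] e0.
have qn : `|q| < 1 by rewrite ger0_norm.
have [N _ hN] := cvgr0_norm_lt _ (cvg_expr qn) _ e0.
by exists N; have := hN N (leqnn N); rewrite /= ger0_norm // exprn_ge0.
Qed.

Lemma ge0_integralDcst (d : measure_display) (T : measurableType d) (R : realType)
    (mu : {measure set T -> \bar R}) (S : set T) (f : T -> R) (c : R) :
  measurable S -> measurable_fun S f -> (forall w, S w -> 0 <= f w) -> 0 <= c ->
  (\int[mu]_(w in S) (f w + c)%:E = \int[mu]_(w in S) (f w)%:E + c%:E * mu S)%E.
Proof.
move=> mS mf f0 c0; rewrite -integral_cst //.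
under eq_integral do rewrite EFinD.
by rewrite ge0_integralD //; exact/measurable_EFinP.
Qed.

Lemma hsign_pm1 (R : realType) (v : R) : hsign v = 1 \/ hsign v = -1.
Proof. by rewrite /hsign; case: ifP; [right|left]. Qed.

Lemma measurable_hsign (R : realType) : measurable_fun setT (@hsign R).
Proof. by apply: measurable_fun_ifT => //; exact: measurable_fun_ler. Qed.

Lemma pm1_neqE (R : realDomainType) (c y : R) : c = 1 \/ c = -1 -> y = 1 \/ y = -1 ->
  c != y <-> y = - c.
Proof. by case=> ->; case=> ->; split => [/eqP|h]; try apply/eqP; lra. Qed.

(* The last clause is a derivative-free form of phi'(0) < 0. *)
Definition calibrated_loss (R : realType) (phi : R -> R) : Prop :=
  [/\ forall v, 0 <= phi v, measurable_fun setT phi,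
      forall v, 0 < v -> phi v < phi (- v) &
      forall q, 0 < q < 1 ->
        exists t, phi t < phi 0 /\ q * (phi (- t) - phi 0) <= phi 0 - phi t].

Section Classification.
Variables (R : realType) (dO dT : measure_display) (Omega : measurableType dO)
  (T : measurableType dT) (P : probability Omega R) (X : Omega -> T) (Y : Omega -> R).
Hypotheses (mX : measurable_fun setT X) (mY : measurable_fun setT Y)
  (HY : forall w, Y w = 1 \/ Y w = -1).

Definition joint (C : set T) (y : R) : set Omega := X @^-1` C `&` [set w | Y w = y].

Lemma measurable_joint C y : measurable C -> measurable (joint C y).
Proof.
move=> mC; apply: measurableI; first exact: measurable_preimageT.
exact: measurable_preimageT mY (measurable_set1 y).
Qed.

Lemma measure_preimageU (C1 C2 : set T) (E : set Omega) :
  measurable C1 -> measurable C2 -> measurable E -> C1 `&` C2 = set0 ->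
  P (X @^-1` (C1 `|` C2) `&` E) = (P (X @^-1` C1 `&` E) + P (X @^-1` C2 `&` E))%E.
Proof.
move=> mC1 mC2 mE C12; rewrite preimage_setU setIUl; apply: measureU.
- by apply: measurableI => //; exact: measurable_preimageT.
- by apply: measurableI => //; exact: measurable_preimageT.
by rewrite setIACA -preimage_setI C12 preimage_set0 set0I.
Qed.

Lemma measurable_misclassified (f : T -> R) : measurable_fun setT f ->
  measurable [set w | f (X w) != Y w].
Proof.
move=> mf; have meq : measurable_fun setT (fun w => f (X w) == Y w).
  by apply: measurable_fun_eqr => //; exact: measurableT_comp.
rewrite (_ : [set w | _] = (fun w => f (X w) == Y w) @^-1` [set false]).
  exact: measurable_preimageT.
by apply/seteqP; split => w /=; case: eqP.
Qed.

Lemma misclassified_const (f : T -> R) (C : set T) (c : R) :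
  c = 1 \/ c = -1 -> (forall x, C x -> f x = c) ->
  X @^-1` C `&` [set w | f (X w) != Y w] = joint C (- c).
Proof.
by move=> hc fC; apply/seteqP; split => w [Cw] /=; rewrite fC // => /(pm1_neqE hc (HY w)).
Qed.

Lemma misclassification_le (h f : T -> R) :
  measurable_fun setT h -> measurable_fun setT f ->
  (forall x, h x = 1 \/ h x = -1) -> (forall x, f x = 1 \/ f x = -1) ->
  (forall (s : R) (C : set T), s = 1 \/ s = -1 -> measurable C ->
     (forall x, C x -> h x = s) -> (P (joint C (- s)) <= P (joint C s))%E) ->
  (P [set w | h (X w) != Y w] <= P [set w | f (X w) != Y w])%E.
Proof.
move=> mh mf hpm fpm h_opt.
pose B s := h @^-1` [set s] `&` f @^-1` [set - s].
have mB s : measurable (B s).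
  by apply: measurableI; apply: measurable_preimageT.
have B_disj : B 1 `&` B (-1) = set0.
  by apply/seteqP; split => x // [[/= h1 _] [/= h2 _]]; lra.
pose D := ~` (B 1 `|` B (-1)).
have fD x : D x -> f x = h x.
  rewrite /D /B /= => nB; case: (hpm x) => hx; case: (fpm x) => fx; rewrite hx fx //.
  - by exfalso; apply: nB; left; rewrite /= hx fx.
  - by exfalso; apply: nB; right; rewrite /= hx fx opprK.
have split_err (u : T -> R) : measurable_fun setT u -> P [set w | u (X w) != Y w] =
    (P (X @^-1` B 1%R `&` [set w | u (X w) != Y w]) +
     P (X @^-1` B (-1)%R `&` [set w | u (X w) != Y w]) +
     P (X @^-1` D `&` [set w | u (X w) != Y w]))%E.
  move=> mu; have mE := measurable_misclassified mu.
  rewrite -[in LHS](setTI [set w | _]) -(preimage_setT X) -(setUv (B 1 `|` B (-1))).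
  have mBB : measurable (B 1 `|` B (-1)) by exact: measurableU.
  by rewrite !measure_preimageU ?setICr //; exact: measurableC.
rewrite (split_err h) // (split_err f) //.
have -> : X @^-1` D `&` [set w | h (X w) != Y w] = X @^-1` D `&` [set w | f (X w) != Y w].
  by apply/seteqP; split => w [Dw]; rewrite /= fD.
have hB s x : B s x -> h x = s by case.
have fB s x : B s x -> f x = - s by case.
rewrite (misclassified_const (or_introl erefl) (hB 1)).
rewrite (misclassified_const (or_intror erefl) (hB (-1))).
rewrite (misclassified_const (or_intror erefl) (fB 1)).
rewrite (misclassified_const (or_introl (opprK 1)) (fB (-1))) !opprK.
apply: leeD2r; apply: leeD; first exact: h_opt (or_introl erefl) (mB 1) (hB 1).
by have := h_opt _ _ (or_intror erefl) (mB (-1)) (hB (-1)); rewrite opprK.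
Qed.

Definition dominates (s q : R) (C : set T) : Prop :=
  (q%:E * P (joint C (- s)) <= P (joint C s))%E.

Lemma dominatesU s q C1 C2 : 0 <= q -> measurable C1 -> measurable C2 ->
  C1 `&` C2 = set0 -> dominates s q C1 -> dominates s q C2 ->
  dominates s q (C1 `|` C2).
Proof.
move=> q0 mC1 mC2 C12 d1 d2; rewrite /dominates /joint.
have mE y : measurable [set w | Y w = y].
  exact: measurable_preimageT mY (measurable_set1 y).
rewrite !measure_preimageU // ge0_muleDr //; exact: leeD.
Qed.

Lemma dominates_bigcup s q (F : (set T)^nat) : 0 <= q ->
  (forall n, measurable (F n)) -> nondecreasing_seq F ->
  (forall n, dominates s q (F n)) -> dominates s q (\bigcup_n F n).
Proof.
move=> q0 mF ndF dF.
have jointE y : joint (\bigcup_n F n) y = \bigcup_n joint (F n) y.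
  by rewrite /joint preimage_bigcup setI_bigcupl.
have mJ y n : measurable (joint (F n) y) by exact: measurable_joint.
have ndJ y : nondecreasing_seq (fun n => joint (F n) y).
  move=> n m /ndF/subsetPset Fnm; apply/subsetPset => w [Fw Yw].
  by split => //; exact: Fnm.
have cvJ y := nondecreasing_cvg_mu (mu := P) (mJ y) (bigcupT_measurable _ (mJ y)) (ndJ y).
have cvq : (fun n => q%:E * P (joint (F n) (- s)))%E @ \oo -->
    (q%:E * P (\bigcup_n joint (F n) (- s)))%E by apply: cvgeZl => //; exact: cvJ.
rewrite /dominates !jointE -(cvg_lim _ cvq) //.
apply: lime_le; first by apply/cvg_ex; eexists; exact: cvq.
apply: nearW => n; apply: (le_trans (dF n)).
by apply: le_measure; rewrite ?inE; [exact: mJ|exact: bigcupT_measurable|by move=> w Jw; exists n].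
Qed.

Lemma dominates_le s C : (forall q, 0 < q < 1 -> dominates s q C) ->
  (P (joint C (- s)) <= P (joint C s))%E.
Proof. by move=> dC; apply/lee_mul01Pr => //; exact: dC. Qed.

Definition risk (phi : R -> R) (u : T -> R) : \bar R :=
  (\int[P]_w (phi (Y w * u (X w)))%:E)%E.

Section Surrogate.
Variables (phi : R -> R) (g : T -> R).
Hypotheses (phi_ge0 : forall v, 0 <= phi v) (mphi : measurable_fun setT phi)
  (mg : measurable_fun setT g)
  (g_opt : forall u, measurable_fun setT u -> (risk phi g <= risk phi u)%E).

Lemma measurable_surrogate (u : T -> R) : measurable_fun setT u ->
  measurable_fun setT (fun w => (phi (Y w * u (X w)))%:E).
Proof.
move=> mu; apply/measurable_EFinP; apply: measurableT_comp => //.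
by apply: measurable_funM => //; exact: measurableT_comp.
Qed.

Lemma fin_num_integral_preimage (C : set T) : measurable C ->
  (\int[P]_(w in X @^-1` C) (phi (Y w * g (X w)))%:E)%E \is a fin_num.
Proof.
move=> mC; rewrite ge0_fin_numE; last by apply: integral_ge0 => w _; rewrite lee_fin.
apply: (@le_lt_trans _ _ (risk phi g)).
  apply: ge0_subset_integral => //; first exact: measurable_preimageT.
  - exact: measurable_surrogate.
  - by move=> w _; rewrite lee_fin.
apply: (le_lt_trans (g_opt (u := fun _ => 0) (measurable_cst _))).
rewrite /risk (eq_integral (fun _ => (phi 0)%:E)); last by move=> w _; rewrite mulr0.
by rewrite integral_cst //= probability_setT mule1 ltry.
Qed.

Lemma integral_preimage_le (C : set T) (u : T -> R) : measurable C ->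
  measurable_fun setT u ->
  (\int[P]_(w in X @^-1` C) (phi (Y w * g (X w)))%:E <=
   \int[P]_(w in X @^-1` C) (phi (Y w * u (X w)))%:E)%E.
Proof.
move=> mC mu.
pose v x := if x \in C then u x else g x.
have mv : measurable_fun setT v.
  apply: measurable_fun_ifT => //; apply: (measurable_fun_bool true).
  rewrite setTI (_ : _ @^-1` _ = C) //.
  by apply/seteqP; split => x /=; [move/set_mem | move=> /mem_set ->].
have mXC := measurable_preimageT mX mC.
have split_risk (f : T -> R) : measurable_fun setT f -> risk phi f =
    (\int[P]_(w in X @^-1` C) (phi (Y w * f (X w)))%:E +
     \int[P]_(w in ~` (X @^-1` C)) (phi (Y w * f (X w)))%:E)%E.
  move=> mf; rewrite /risk -(setUv (X @^-1` C)) ge0_integral_setU ?setUv //.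
  - exact: measurableC.
  - exact: measurable_surrogate.
  - by move=> w _; rewrite lee_fin.
  - by rewrite disj_set2E setICr.
have := g_opt mv; rewrite split_risk // split_risk //.
rewrite [X in (_ <= _ + X)%E](eq_integral (fun w => (phi (Y w * g (X w)))%:E)); last first.
  by move=> w /set_mem /= XCw; rewrite /v memNset.
rewrite [X in (_ <= X + _)%E](eq_integral (fun w => (phi (Y w * u (X w)))%:E)); last first.
  by move=> w /set_mem /= XCw; rewrite /v mem_set.
by rewrite leeD2rE // preimage_setC fin_num_integral_preimage //; exact: measurableC.
Qed.

Lemma integral_joint_split (C : set T) (u : T -> R) (s : R) :
  s = 1 \/ s = -1 -> measurable C -> measurable_fun setT u ->
  (\int[P]_(w in X @^-1` C) (phi (Y w * u (X w)))%:E =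
   \int[P]_(w in joint C s) (phi (s * u (X w)))%:E +
   \int[P]_(w in joint C (- s)) (phi (- s * u (X w)))%:E)%E.
Proof.
move=> hs mC mu.
have -> : X @^-1` C = joint C s `|` joint C (- s).
  apply/seteqP; split => [w Cw|w [] [] //].
  by case: (HY w) => Yw; case: hs => ss; [left|right|right|left]; split => //=; lra.
rewrite ge0_integral_setU //; first last.
- rewrite disj_set2E; apply/eqP/seteqP; split => // w [[_ /= h1] [_ /= h2]].
  by case: hs => ss; lra.
- by move=> w _; rewrite lee_fin.
- exact: measurable_funS (measurable_surrogate mu).
- exact: measurable_joint.
- exact: measurable_joint.
by congr (_ + _)%E; apply: eq_integral => w /set_mem [_ ->].
Qed.

Definition flip_cost (s : R) (x : T) : R := phi (- (s * g x)) - phi (s * g x).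

Lemma measurable_flip_cost s : measurable_fun setT (flip_cost s).
Proof.
have msg : measurable_fun setT (fun x => s * g x) by exact: measurable_funM.
apply: measurable_funB; apply: measurableT_comp => //; exact: measurable_funN.
Qed.

(* Flipping g to -g on C costs at most b on the label s and gains at least a on -s. *)
Lemma flip_cost_bound (C : set T) (s a b : R) :
  s = 1 \/ s = -1 -> measurable C -> 0 <= a <= b ->
  (forall x, C x -> a <= flip_cost s x <= b) ->
  (a%:E * P (joint C (- s)) <= b%:E * P (joint C s))%E.
Proof.
move=> hs mC /andP[a0 ab] hab.
have mJ y : measurable (joint C y) by exact: measurable_joint.
have mSg (S : set Omega) (t : R) (f : T -> R) : measurable_fun setT f ->
    measurable_fun S (fun w => phi (t * f (X w))).
  move=> mf; apply: (measurable_funS measurableT (subsetT S)); apply: measurableT_comp => //.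
  by apply: measurable_funM => //; exact: measurableT_comp.
have mng : measurable_fun setT (fun x => - g x) by exact: measurable_funN.
have opt := integral_preimage_le mC mng.
rewrite (integral_joint_split hs mC mg) (integral_joint_split hs mC mng) in opt.
have up : (\int[P]_(w in joint C s) (phi (s * - g (X w)))%:E <=
    \int[P]_(w in joint C s) (phi (s * g (X w)) + b)%:E)%E.
  apply: ge0_le_integral => //.
  - by move=> w _; rewrite lee_fin.
  - exact/measurable_EFinP/(mSg _ _ _ mng).
  - by apply/measurable_EFinP/measurable_funD => //; exact: mSg.
  move=> w [Cw _]; rewrite lee_fin mulrN -lerBlDl.
  by have /andP[] := hab _ Cw.
have down : (\int[P]_(w in joint C (- s)) (phi (- s * - g (X w)) + a)%:E <=
    \int[P]_(w in joint C (- s)) (phi (- s * g (X w)))%:E)%E.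
  apply: ge0_le_integral => //.
  - by move=> w _; rewrite lee_fin addr_ge0.
  - by apply/measurable_EFinP/measurable_funD => //; exact: mSg mng.
  - exact/measurable_EFinP/mSg.
  move=> w [Cw _]; rewrite lee_fin mulrNN mulNr -lerBrDl.
  by have /andP[] := hab _ Cw.
have b0 : 0 <= b := le_trans a0 ab.
rewrite ge0_integralDcst // in up; last exact: mSg.
rewrite ge0_integralDcst // in down; last exact: mSg mng.
rewrite -(@leeD2lE _ _ _ _ (fin_num_integral_preimage mC)) (integral_joint_split hs mC mg).
apply: le_trans (leeD2r _ opt) _.
by rewrite -addeA (le_trans (leeD up down)) // addeAC.
Qed.

Definition flip_slice (s : R) (C : set T) (lo hi : R) : set T :=
  C `&` flip_cost s @^-1` [set` `]lo, hi]].

Lemma measurable_flip_slice s C lo hi : measurable C ->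
  measurable (flip_slice s C lo hi).
Proof.
by move=> mC; apply: measurableI => //; exact: measurable_preimageT (measurable_flip_cost s) _.
Qed.

Lemma dominates_flip_slice s q C hi : s = 1 \/ s = -1 -> 0 <= q <= 1 -> 0 < hi ->
  measurable C -> dominates s q (flip_slice s C (q * hi) hi).
Proof.
move=> hs /andP[q0 q1] hi0 mC.
rewrite /dominates -(@lee_pmul2l _ hi%:E) // muleA -EFinM [hi * q]mulrC.
apply: flip_cost_bound => //.
- exact: measurable_flip_slice.
- by rewrite mulr_ge0 ?ler_piMl // ltW.
by move=> x [_]; rewrite /= in_itv /= => /andP[/ltW -> ->].
Qed.

Lemma dominates_flip_slices s q C hi n : s = 1 \/ s = -1 -> 0 < q <= 1 -> 0 < hi ->
  measurable C -> dominates s q (flip_slice s C (q ^+ n * hi) hi).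
Proof.
move=> hs /andP[q0 q1] hi0 mC; elim: n => [|n IH].
  rewrite expr0 mul1r /dominates /flip_slice set_itvoc0 preimage_set0 setI0.
  by rewrite /joint preimage_set0 set0I measure0 mule0.
have qn0 : 0 < q ^+ n * hi by rewrite mulr_gt0 // exprn_gt0.
have ltn : q ^+ n.+1 * hi <= q ^+ n * hi by rewrite exprS -mulrA ler_piMl // ltW.
have le_hi : q ^+ n * hi <= hi by rewrite ler_piMl ?exprn_ile1 // ?ltW.
have -> : flip_slice s C (q ^+ n.+1 * hi) hi =
    flip_slice s C (q ^+ n.+1 * hi) (q ^+ n * hi) `|` flip_slice s C (q ^+ n * hi) hi.
  by rewrite /flip_slice -setIUr -preimage_setU -itv_bndbnd_setU ?bnd_simp.
apply: dominatesU => //; try exact: measurable_flip_slice.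
- exact: ltW.
- apply/seteqP; split => // x [[_ /= h1] [_ /= h2]].
  by move: h1 h2; rewrite !in_itv /= => /andP[_ h1] /andP[h2 _]; lra.
- by rewrite exprS -mulrA; apply: dominates_flip_slice => //; rewrite (ltW q0) q1.
Qed.

Lemma flip_slices_bigcup s q C : 0 < q < 1 -> (forall x, C x -> 0 < flip_cost s x) ->
  C = \bigcup_N flip_slice s C (q ^+ N) (q ^+ N)^-1.
Proof.
move=> /andP[q0 q1] Cpos; apply/seteqP; split => [x Cx|x [N _ []] //].
have c0 := Cpos x Cx; set c := flip_cost s x in c0.
have q01 : 0 <= q < 1 by rewrite (ltW q0).
have m0 : 0 < Num.min c c^-1 by rewrite lt_min c0 invr_gt0.
have [N qN] := exists_expr_lt q01 m0.
exists N => //; split => //=; rewrite in_itv /=; move: qN; rewrite lt_min => /andP[-> qNc] /=.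
by rewrite -[flip_cost s x]invrK lef_pV2 ?posrE ?invr_gt0 ?exprn_gt0 //; exact: ltW.
Qed.

Lemma dominates_flip_cost_gt0 s q C : s = 1 \/ s = -1 -> 0 < q < 1 -> measurable C ->
  (forall x, C x -> 0 < flip_cost s x) -> dominates s q C.
Proof.
move=> hs q01 mC Cpos; have /andP[q0 q1] := q01.
rewrite (flip_slices_bigcup q01 Cpos); apply: dominates_bigcup.
- exact: ltW.
- by move=> N; exact: measurable_flip_slice.
- move=> N M NM; apply/subsetPset => x [Cx]; rewrite /= !in_itv /= => /andP[lo hi].
  have qMN : q ^+ M <= q ^+ N by rewrite ler_wiXn2l // ltW.
  split => //=; rewrite in_itv /=; apply/andP; split; first exact: le_lt_trans lo.
  by rewrite (le_trans hi) // lef_pV2 ?posrE ?exprn_gt0.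
move=> N; have qN0 : 0 < (q ^+ N)^-1 by rewrite invr_gt0 exprn_gt0.
have q01' : 0 < q <= 1 by rewrite q0 ltW.
have := dominates_flip_slices (N + N) hs q01' qN0 mC.
by rewrite exprD -mulrA mulfV ?mulr1 // gt_eqF // exprn_gt0.
Qed.

Lemma dominates_zero_margin (C : set T) (q t : R) : measurable C -> 0 <= q ->
  (forall x, C x -> g x = 0) -> phi t < phi 0 ->
  q * (phi (- t) - phi 0) <= phi 0 - phi t -> dominates (-1) q C.
Proof.
move=> mC q0 g0 t_lt slope; rewrite /dominates opprK.
have mJ y : measurable (joint C y) by exact: measurable_joint.
have cst_int y c (f : Omega -> R) : (forall w, joint C y w -> f w = c) ->
    (\int[P]_(w in joint C y) (f w)%:E = c%:E * P (joint C y))%E.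
  by move=> fc; rewrite -integral_cst //; apply: eq_integral => w /set_mem /fc ->.
have finP y : exists2 r, P (joint C y) = r%:E & 0 <= r.
  by exists (fine (P (joint C y))); rewrite ?fineK ?fine_ge0 // fin_num_measure.
have := integral_preimage_le mC (measurable_cst t).
rewrite (integral_joint_split (or_introl erefl) mC mg).
rewrite (integral_joint_split (or_introl erefl) mC (measurable_cst t)).
rewrite (cst_int 1 (phi 0) (fun w => phi (1 * g (X w)))); last first.
  by move=> w [Cw _]; rewrite g0 // mulr0.
rewrite (cst_int (-1) (phi 0) (fun w => phi (- 1 * g (X w)))); last first.
  by move=> w [Cw _]; rewrite g0 // mulr0.
rewrite (cst_int 1 (phi t) (fun w => phi (1 * cst t (X w)))); last first.
  by move=> w _; rewrite mul1r.
rewrite (cst_int (-1) (phi (- t)) (fun w => phi (- 1 * cst t (X w)))); last first.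
  by move=> w _; rewrite mulN1r.
have [p -> p0] := finP 1; have [m -> m0] := finP (-1).
rewrite -!EFinM -!EFinD !lee_fin => opt.
have d0 : 0 < phi 0 - phi t by rewrite subr_gt0.
rewrite -(ler_pM2l d0) (le_trans _ (ler_wpM2r m0 slope)) //.
by rewrite mulrCA -mulrA ler_wpM2l //; lra.
Qed.

Hypotheses (phi_ltN : forall v, 0 < v -> phi v < phi (- v))
  (phi_slope : forall q, 0 < q < 1 ->
     exists t, phi t < phi 0 /\ q * (phi (- t) - phi 0) <= phi 0 - phi t).

Lemma joint_le_hsign (s : R) (C : set T) : s = 1 \/ s = -1 -> measurable C ->
  (forall x, C x -> hsign (g x) = s) -> (P (joint C (- s)) <= P (joint C s))%E.
Proof.
move=> hs mC hC; apply: dominates_le => q q01; have /andP[q0 _] := q01.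
case: (hs) => s1; rewrite s1 in hC *.
  apply: (dominates_flip_cost_gt0 (or_introl erefl)) => // x Cx.
  rewrite /flip_cost subr_gt0 !mul1r.
  by apply: phi_ltN; move: (hC x Cx); rewrite /hsign; case: ifP => //; lra.
pose Cneg := C `&` g @^-1` `]-oo, 0[; pose Czero := C `&` g @^-1` [set 0].
have mCneg : measurable Cneg by apply: measurableI => //; exact: measurable_preimageT.
have mCzero : measurable Czero by apply: measurableI => //; exact: measurable_preimageT.
have -> : C = Cneg `|` Czero.
  apply/seteqP; split => [x Cx|x [] []//].
  have := hC x Cx; rewrite /hsign; case: ifPn => [|_]; last lra.
  by rewrite le_eqVlt => /predU1P[gx0|gx0] _; [right|left]; split; rewrite /= ?in_itv.
apply: dominatesU => //; first exact: ltW.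
- apply/seteqP; split => // x [[_ /=]]; rewrite in_itv /= => gx [_ /= gx0].
  by rewrite gx0 ltxx in gx.
- apply: (dominates_flip_cost_gt0 (or_intror erefl)) => // x [_ /=].
  rewrite in_itv /= => gx.
  rewrite /flip_cost subr_gt0 !mulN1r opprK.
  by have := @phi_ltN (- g x); rewrite opprK oppr_gt0; exact.
- have [t [t_lt t_slope]] := phi_slope q01.
  by apply: (dominates_zero_margin mCzero (ltW q0) _ t_lt t_slope) => x [].
Qed.

End Surrogate.

Theorem calibrated_loss_bayes (phi : R -> R) (g : T -> R) : calibrated_loss phi ->
  measurable_fun setT g ->
  (forall u, measurable_fun setT u -> (risk phi g <= risk phi u)%E) ->
  P [set w | hsign (g (X w)) != Y w] =
  ereal_inf [set P [set w | f (X w) != Y w] | f in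
     [set f : T -> R | measurable_fun setT f /\ forall x, f x = 1 \/ f x = -1]].
Proof.
move=> [phi_ge0 mphi phi_ltN phi_slope] mg g_opt.
have mhg : measurable_fun setT (fun x => hsign (g x)).
  exact: measurableT_comp (@measurable_hsign R) mg.
apply/eqP; rewrite eq_le; apply/andP; split.
  apply: le_ereal_inf_tmp => _ [f [mf fpm] <-].
  apply: (misclassification_le mhg mf _ fpm) => [x|s C hs mC hC]; first exact: hsign_pm1.
  exact: (joint_le_hsign phi_ge0 mphi mg g_opt phi_ltN phi_slope hs mC hC).
by apply: ereal_inf_lbound; exists (fun x => hsign (g x)) => //; split => // x; exact: hsign_pm1.
Qed.

End Classification.

Section Sigmoid.
Variable R : realType.
Implicit Types v p : R.

Definition sigmoid v : R := 1 / (1 + expR (- v)).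

Definition logit p : R := ln (p / (1 - p)).

Lemma sigmoid_gt0 v : 0 < sigmoid v.
Proof. by rewrite divr_gt0 // addr_gt0 // expR_gt0. Qed.

Lemma sigmoidN v : sigmoid (- v) = 1 - sigmoid v.
Proof.
rewrite /sigmoid opprK expRN.
have e0 := expR_gt0 v; have e1 : 0 < expR v + 1 by lra.
by field; rewrite (gt_eqF e0) (gt_eqF e1).
Qed.

Lemma sigmoid_lt1 v : sigmoid v < 1.
Proof. by have := sigmoid_gt0 (- v); rewrite sigmoidN; lra. Qed.

Lemma sigmoid0 : sigmoid 0 = 1 / 2.
Proof. by rewrite /sigmoid oppr0 expR0. Qed.

Lemma sigmoid_ltN v : 0 < v -> sigmoid (- v) < sigmoid v.
Proof.
move=> v0; have e : expR (- v) < 1 by rewrite -expR0 ltr_expR; lra.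
have : 1 / 2 < sigmoid v by rewrite /sigmoid ltr_pdivlMr ?addr_gt0 ?expR_gt0 //; lra.
by rewrite sigmoidN; lra.
Qed.

Lemma logitK p : 0 < p < 1 -> sigmoid (logit p) = p.
Proof.
move=> /andP[p0 p1]; rewrite /sigmoid /logit expRN lnK ?posrE ?divr_gt0 ?subr_gt0 //.
by rewrite invf_div; field; rewrite gt_eqF ?subr_gt0 //=; apply/eqP; lra.
Qed.

Lemma measurable_sigmoid : measurable_fun setT sigmoid.
Proof.
have -> : sigmoid = fun v => expR (- ln (1 + expR (- v))).
  apply/funext => v; rewrite /sigmoid div1r [expR (- ln _)]expRN lnK //.
  by rewrite posrE addr_gt0 // expR_gt0.
apply: measurableT_comp; first exact: measurable_expR.
apply: measurable_funN; apply: measurableT_comp; first exact: measurable_ln.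
apply: measurable_funD => //; apply: measurableT_comp; first exact: measurable_expR.
exact: measurable_funN.
Qed.

End Sigmoid.

Section Losses.
Variable R : realType.

Lemma ln1D_ge (x : R) : -1 / 2 <= x -> x - 2 * x ^+ 2 <= ln (1 + x).
Proof.
move=> hx; have x1 : 0 < 1 + x by lra.
have lnV1 : 1 - (1 + x)^-1 <= ln (1 + x).
  have inv0 : 0 < (1 + x)^-1 by rewrite invr_gt0.
  have /le_ln1Dx : -1 < (1 + x)^-1 - 1 by lra.
  by rewrite addrCA subrr addr0 lnV ?posrE //; lra.
apply: le_trans lnV1.
have -> : 1 - (1 + x)^-1 = x / (1 + x) by field; rewrite gt_eqF.
rewrite ler_pdivlMr //.
have : 0 <= x ^+ 2 * (1 + 2 * x) by rewrite mulr_ge0 ?sqr_ge0 //; lra.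
by rewrite expr2; nra.
Qed.

Definition shrunk_sigmoid (c v : R) : R := c * sigmoid v + (1 - c) / 2.

Definition cross_entropy_loss (A c v : R) : R :=
  - A * ln (shrunk_sigmoid c v) - (1 - A) * ln (shrunk_sigmoid c (- v)).

Section CrossEntropy.
Variables A c : R.

Lemma shrunk_sigmoid_gt0 v : 0 < c <= 1 -> 0 < shrunk_sigmoid c v.
Proof.
move=> /andP[c0 c1]; have h : 0 < c * sigmoid v by rewrite mulr_gt0 ?sigmoid_gt0.
by rewrite /shrunk_sigmoid; lra.
Qed.

Lemma shrunk_sigmoid_le1 v : 0 < c <= 1 -> shrunk_sigmoid c v <= 1.
Proof.
move=> /andP[c0 c1]; have : c * sigmoid v <= c by rewrite ler_piMr ?ltW ?sigmoid_lt1.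
by rewrite /shrunk_sigmoid; lra.
Qed.

Lemma shrunk_sigmoid_logit y : -1 < y < 1 ->
  shrunk_sigmoid c (logit ((1 + y) / 2)) = (1 + c * y) / 2 /\
  shrunk_sigmoid c (- logit ((1 + y) / 2)) = (1 - c * y) / 2.
Proof.
move=> /andP[y0 y1]; have p01 : 0 < (1 + y) / 2 < 1 by apply/andP; split; lra.
by rewrite /shrunk_sigmoid sigmoidN logitK //; split; field.
Qed.

Lemma cross_entropy_loss_ge0 v : 0 <= A <= 1 -> 0 < c <= 1 ->
  0 <= cross_entropy_loss A c v.
Proof.
move=> /andP[A0 A1] hc.
have l1 := ln_le0 (shrunk_sigmoid_le1 v hc).
have l2 := ln_le0 (shrunk_sigmoid_le1 (- v) hc).
by rewrite /cross_entropy_loss; nra.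
Qed.

Lemma measurable_cross_entropy_loss : measurable_fun setT (cross_entropy_loss A c).
Proof.
have mlnS (f : R -> R) : measurable_fun setT f ->
    measurable_fun setT (fun v => ln (shrunk_sigmoid c (f v))).
  move=> mf; apply: measurableT_comp; first exact: measurable_ln.
  apply: measurable_funD => //; apply: measurable_funM => //.
  exact: measurableT_comp (@measurable_sigmoid R) mf.
apply: measurable_funB; apply: measurable_funM => //; first exact: (mlnS id).
by apply: mlnS; exact: measurable_funN.
Qed.

Lemma cross_entropy_loss_ltN v : 1 / 2 < A -> 0 < c <= 1 -> 0 < v ->
  cross_entropy_loss A c v < cross_entropy_loss A c (- v).
Proof.
move=> A_gt hc v0; rewrite /cross_entropy_loss opprK.
have : ln (shrunk_sigmoid c (- v)) < ln (shrunk_sigmoid c v).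
  rewrite ltr_ln ?posrE ?shrunk_sigmoid_gt0 // ltrD2r ltr_pM2l ?sigmoid_ltN //.
  by case/andP: hc.
move=> lt_ln; rewrite -subr_gt0.
have -> : - A * ln (shrunk_sigmoid c (- v)) - (1 - A) * ln (shrunk_sigmoid c v) -
    (- A * ln (shrunk_sigmoid c v) - (1 - A) * ln (shrunk_sigmoid c (- v))) =
    (2 * A - 1) * (ln (shrunk_sigmoid c v) - ln (shrunk_sigmoid c (- v))) by ring.
by rewrite mulr_gt0 ?subr_gt0 //; lra.
Qed.

Lemma ln1D_mix_bounds q x : 1 / 2 < A <= 1 -> 0 < q < 1 -> 0 < x ->
  2 * x * (1 + q) <= (2 * A - 1) * (1 - q) ->
  0 < A * ln (1 + x) + (1 - A) * ln (1 - x) /\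
  q * (- (A * ln (1 - x)) - (1 - A) * ln (1 + x)) <= A * ln (1 + x) + (1 - A) * ln (1 - x).
Proof.
move=> /andP[A_gt A_le1] /andP[q0 q1] x0 hx.
have x_lt : 2 * x < 2 * A - 1.
  have : 0 < q * (2 * A - 1) by rewrite mulr_gt0 //; lra.
  by rewrite -(@ltr_pM2r _ (1 + q)); lra.
have la : x - 2 * x ^+ 2 <= ln (1 + x) by apply: ln1D_ge; lra.
have lb : - x - 2 * x ^+ 2 <= ln (1 - x).
  by have := @ln1D_ge (- x); rewrite sqrrN; apply; lra.
move: (ln (1 + x)) (ln (1 - x)) la lb => a b la lb.
have hAa : A * (x - 2 * x ^+ 2) <= A * a by rewrite ler_wpM2l //; lra.
have hAb : A * (- x - 2 * x ^+ 2) <= A * b by rewrite ler_wpM2l //; lra.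
have hBa : (1 - A) * (x - 2 * x ^+ 2) <= (1 - A) * a by rewrite ler_wpM2l //; lra.
have hBb : (1 - A) * (- x - 2 * x ^+ 2) <= (1 - A) * b by rewrite ler_wpM2l //; lra.
have gain : 0 < x * (2 * A - 1) - 2 * x ^+ 2.
  have -> : x * (2 * A - 1) - 2 * x ^+ 2 = x * ((2 * A - 1) - 2 * x) by ring.
  by rewrite mulr_gt0 // subr_gt0.
have ratio : q * (x * (2 * A - 1) + 2 * x ^+ 2) <= x * (2 * A - 1) - 2 * x ^+ 2.
  rewrite -subr_ge0.
  have -> : x * (2 * A - 1) - 2 * x ^+ 2 - q * (x * (2 * A - 1) + 2 * x ^+ 2) =
      x * ((2 * A - 1) * (1 - q) - 2 * x * (1 + q)) by ring.
  by rewrite mulr_ge0 ?subr_ge0 // ltW.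
split; first lra.
have : q * (- (A * b) - (1 - A) * a) <= q * (x * (2 * A - 1) + 2 * x ^+ 2).
  by rewrite ler_wpM2l //; lra.
lra.
Qed.

Lemma cross_entropy_loss_slope q : 1 / 2 < A <= 1 -> 0 < c <= 1 -> 0 < q < 1 ->
  exists t, cross_entropy_loss A c t < cross_entropy_loss A c 0 /\
    q * (cross_entropy_loss A c (- t) - cross_entropy_loss A c 0) <=
      cross_entropy_loss A c 0 - cross_entropy_loss A c t.
Proof.
move=> hA /andP[c0 c1] q01; have /andP[A_gt A_le1] := hA; have /andP[q0 q1] := q01.
have K0 : 0 < (2 * A - 1) * (1 - q) by rewrite mulr_gt0 //; lra.
have K1 : (2 * A - 1) * (1 - q) <= 1 - q by rewrite ler_piMl //; lra.
have [y ey] : exists y, y * (2 * (1 + q)) = (2 * A - 1) * (1 - q).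
  by exists ((2 * A - 1) * (1 - q) / (2 * (1 + q))); rewrite divfK // gt_eqF //; lra.
have y0 : 0 < y by rewrite -(@ltr_pM2r _ (2 * (1 + q))) ?ey ?mul0r //; lra.
have y1 : y <= 1 / 2 by rewrite -(@ler_pM2r _ (2 * (1 + q))) ?ey; lra.
have y11 : -1 < y < 1 by apply/andP; split; lra.
exists (logit ((1 + y) / 2)); rewrite /cross_entropy_loss opprK oppr0.
have [-> ->] := shrunk_sigmoid_logit y11.
have -> : shrunk_sigmoid c 0 = 1 / 2 by rewrite /shrunk_sigmoid sigmoid0; field.
have x0 : 0 < c * y by rewrite mulr_gt0.
have x1 : c * y <= y by rewrite ler_piMl // ltW.
have lnM2 (z : R) : 0 < z -> ln (z / 2) = ln z + ln (1 / 2).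
  by move=> z0; rewrite -lnM ?posrE ?mul1r //; lra.
rewrite (lnM2 (1 + c * y)) ?(lnM2 (1 - c * y)); [|lra|lra].
have [] := @ln1D_mix_bounds q (c * y) hA q01 x0.
  have -> : 2 * (c * y) * (1 + q) = c * ((2 * A - 1) * (1 - q)) by rewrite -ey; ring.
  by rewrite ler_piMl // ltW.
by move: (ln (1 + c * y)) (ln (1 - c * y)) (ln (1 / 2)) => a b L; split; lra.
Qed.

Lemma cross_entropy_loss_calibrated : 1 / 2 < A <= 1 -> 0 < c <= 1 ->
  calibrated_loss (cross_entropy_loss A c).
Proof.
move=> hA hc; have /andP[A_gt A_le1] := hA.
split.
- by move=> v; apply: cross_entropy_loss_ge0 => //; apply/andP; lra.
- exact: measurable_cross_entropy_loss.
- by move=> v; apply: cross_entropy_loss_ltN.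
- by move=> q; apply: cross_entropy_loss_slope.
Qed.

End CrossEntropy.

Lemma phi_LSQE : @phi_LSQ R = fun v => sigmoid (- v) ^+ 2 / 2.
Proof.
apply/funext => v; rewrite /phi_LSQ /sigmoid opprK.
have v0 : 0 < 1 + expR v by rewrite addr_gt0 // expR_gt0.
by field; rewrite gt_eqF.
Qed.

Lemma phi_LSQ_calibrated : calibrated_loss (@phi_LSQ R).
Proof.
rewrite phi_LSQE; split.
- by move=> v; rewrite divr_ge0 // sqr_ge0.
- apply: measurable_funM => //; apply: measurable_funX.
  exact: measurableT_comp (@measurable_sigmoid R) (measurable_funN _).
- move=> v v0; rewrite opprK ltr_pM2r // ltr_pXn2r ?nnegrE ?ltW ?sigmoid_gt0 //.
  exact: sigmoid_ltN.
move=> q /andP[q0 q1].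
have [y ey] : exists y, y * (1 + q) = 1 - q.
  by exists ((1 - q) / (1 + q)); rewrite divfK // gt_eqF //; lra.
have y0 : 0 < y by rewrite -(@ltr_pM2r _ (1 + q)) ?ey ?mul0r //; lra.
have y1 : y < 1 by rewrite -(@ltr_pM2r _ (1 + q)) ?ey ?mul1r //; lra.
have p01 : 0 < (1 + y) / 2 < 1 by apply/andP; split; lra.
exists (logit ((1 + y) / 2)).
rewrite opprK oppr0 sigmoidN logitK // sigmoid0.
split; first by rewrite ltr_pM2r // ltr_pXn2r ?nnegrE //; lra.
rewrite -subr_ge0.
have -> : (1 / 2) ^+ 2 / 2 - (1 - (1 + y) / 2) ^+ 2 / 2 -
    q * (((1 + y) / 2) ^+ 2 / 2 - (1 / 2) ^+ 2 / 2) = y * (2 * (1 - q) - y * (1 + q)) / 8.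
  by field.
by rewrite ey divr_ge0 // mulr_ge0 //; lra.
Qed.

Lemma phi_LRE : @phi_LR R = cross_entropy_loss 1 1.
Proof.
apply/funext => v; rewrite /cross_entropy_loss /shrunk_sigmoid /phi_LR.
by rewrite /sigmoid !(subrr, mul0r, mul1r, addr0, subr0, mulN1r).
Qed.

Lemma phi_LSE alpha : phi_LS alpha = cross_entropy_loss (1 - alpha / 2) 1.
Proof.
apply/funext => v; rewrite /cross_entropy_loss /shrunk_sigmoid /phi_LS /sigmoid.
rewrite opprK subrr mul0r !addr0 !mul1r.
by rewrite (_ : 1 - (1 - alpha / 2) = alpha / 2) //; ring.
Qed.

Lemma phi_MLSE alpha : phi_MLS alpha = cross_entropy_loss (1 - alpha / 2) (1 - alpha).
Proof.
apply/funext => v; rewrite /cross_entropy_loss /shrunk_sigmoid /phi_MLS /sigmoid.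
rewrite opprK !mul1r (_ : 1 - (1 - alpha / 2) = alpha / 2); last by ring.
by rewrite (_ : (1 - (1 - alpha)) / 2 = alpha / 2) //; ring.
Qed.

Lemma loss_calibrated (k : loss_kind) (alpha : R) : 0 <= alpha < 1 ->
  calibrated_loss (loss k alpha).
Proof.
move=> /andP[a0 a1]; case: k => /=; last exact: phi_LSQ_calibrated.
all: rewrite ?phi_LRE ?phi_LSE ?phi_MLSE.
all: by apply: cross_entropy_loss_calibrated; apply/andP; lra.
Qed.

End Losses.

Theorem corollary2 (R : realType) (dm : measure_display)
  (Omega : measurableType dm) (P : probability Omega R) (d : nat)
  (X : Omega -> d.-tuple R) (Y : Omega -> R)
  (mX : measurable_fun setT X) (mY : measurable_fun setT Y)
  (HY : forall w, Y w = 1 \/ Y w = -1)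
  (alpha : R) (ha0 : 0 <= alpha) (ha1 : alpha < 1) (k : loss_kind)
  (gbar : d.-tuple R -> R) (mgbar : measurable_fun setT gbar)
  (hgbar : forall g : d.-tuple R -> R, measurable_fun setT g ->
     (\int[P]_w (loss k alpha (Y w * gbar (X w)))%:E <=
      \int[P]_w (loss k alpha (Y w * g (X w)))%:E)%E) :
  P [set w | hsign (gbar (X w)) != Y w] =
  ereal_inf [set P [set w | f (X w) != Y w] | f in
     [set f : d.-tuple R -> R | measurable_fun setT f /\
        forall x, f x = 1 \/ f x = -1]].
Proof.
have ha : 0 <= alpha < 1 by rewrite ha0 ha1.
exact: (calibrated_loss_bayes mX mY HY (loss_calibrated k ha) mgbar hgbar).
Qed.
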